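(* Let $\Gamma$ be a smooth simple closed curve in $\mathbb R^2$ with arclength parameter $\theta\in[0,\ell)$ and curvature $\kappa(\theta)$, let $M_0>0$ be such that Fermi coordinates $\mathbf y=\gamma(\theta)+t\nu(\theta)$, $|t|<M_0$, are valid, and let $u$ be a (classical) solution of $-\epsilon^2\Delta u+[1+\epsilon^2W(\mathbf y)]u-|u|^2u=0$ in $\mathbb R^2$, written $u=u(t,\theta)$, $W=W(t,\theta)$ in these coordinates. Then for every constant $0<M<M_0$ and every $\theta$, with $\kappa=\kappa(\theta)$: $$\epsilon^2\!\int_{-M}^{M}\!(1+\kappa t)u_t^2\,\mathrm dt+\!\int_{-M}^{M}\!(1+\kappa t)[1+\epsilon^2W]u^2\,\mathrm dt-\!\int_{-M}^{M}\!(1+\kappa t)u^4\,\mathrm dt=\epsilon^2\!\int_{-M}^{M}\!u\,\partial_\theta\Big[\tfrac{\partial_\theta u}{1+\kappa t}\Big]\mathrm dt+\epsilon^2(1+\kappa t)uu_t\Big|_{t=-M}^{M},$$ $$\epsilon^2\!\int_{-M}^{M}\!(1+\kappa t)^2W_tu^2\,\mathrm dt+2\kappa\!\int_{-M}^{M}\!(1+\kappa t)[1+\epsilon^2W]u^2\,\mathrm dt-\kappa\!\int_{-M}^{M}\!(1+\kappa t)u^4\,\mathrm dt$$ $$=-2\epsilon^2\!\int_{-M}^{M}\!(1+\kappa t)u_t\,\partial_\theta\Big[\tfrac{\partial_\theta u}{1+\kappa t}\Big]\mathrm dt-\epsilon^2\big[(1+\kappa t)u_t\big]^2\Big|_{-M}^{M}+(1+\kappa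 t)^2[1+\epsilon^2W]u^2\Big|_{-M}^{M}-\tfrac12(1+\kappa t)^2|u|^4\Big|_{-M}^{M},$$ and consequently $$2\epsilon^2\kappa\!\int_{-M}^{M}\!(1+\kappa t)u_t^2\,\mathrm dt-\epsilon^2\!\int_{-M}^{M}\!(1+\kappa t)^2W_tu^2\,\mathrm dt-\kappa\!\int_{-M}^{M}\!(1+\kappa t)u^4\,\mathrm dt$$ $$=2\epsilon^2\!\int_{-M}^{M}\!\partial_t\big[(1+\kappa t)u\big]\,\partial_\theta\Big[\tfrac{\partial_\theta u}{1+\kappa t}\Big]\mathrm dt+2\epsilon^2\kappa(1+\kappa t)uu_t\Big|_{-M}^{M}+\epsilon^2\big[(1+\kappa t)u_t\big]^2\Big|_{-M}^{M}-(1+\kappa t)^2[1+\epsilon^2W]u^2\Big|_{-M}^{M}+\tfrac12(1+\kappa t)^2|u|^4\Big|_{-M}^{M}.$$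
   Context: $\nu$ is the unit outer normal to $\Gamma$. In Fermi coordinates the Laplacian is $\Delta=\frac{1}{1+\kappa t}\partial_t\big[(1+\kappa t)\partial_t\big]+\frac{1}{1+\kappa t}\partial_\theta\big[\frac{1}{1+\kappa t}\partial_\theta\big]$. *)

From Stdlib Require Import Reals.
From Coquelicot Require Import Coquelicot.
Open Scope R_scope.

Definition pt (f : R -> R -> R) (t th : R) : R := Derive (fun s => f s th) t.
Definition pth (f : R -> R -> R) (t th : R) : R := Derive (fun s => f t s) th.

Definition C1_strip (M0 : R) (f : R -> R -> R) : Prop :=
  forall t th, Rabs t < M0 ->
    ex_derive (fun s => f s th) t /\ ex_derive (fun s => f t s) th /\
    continuous (fun p : R * R => f (fst p) (snd p)) (t, th) /\
    continuous (fun p : R * R => pt f (fst p) (snd p)) (t, th) /\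
    continuous (fun p : R * R => pth f (fst p) (snd p)) (t, th).

Definition C2_strip (M0 : R) (f : R -> R -> R) : Prop :=
  C1_strip M0 f /\ C1_strip M0 (pt f) /\ C1_strip M0 (pth f).

(* Boundary evaluation  F |_{t=a}^{b} = F b - F a. *)
Definition evalb (F : R -> R) (a b : R) : R := F b - F a.

(* Laplacian in Fermi coordinates:
   Δu = 1/(1+κt) ∂_t[(1+κt) ∂_t u] + 1/(1+κt) ∂_θ[ ∂_θ u / (1+κt) ]. *)
Definition fermi_lap (kappa : R -> R) (u : R -> R -> R) (t th : R) : R :=
  / (1 + kappa th * t) * pt (fun s x => (1 + kappa x * s) * pt u s x) t th
  + / (1 + kappa th * t) * pth (fun s x => pth u s x / (1 + kappa x * s)) t th.

(** Fix θ and work on the normal segment |t| ≤ M.  With c(t) = 1 + κ t, the equation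
    multiplied by c is the ODE  ε² ((c u_t)_t + ∂_θ[∂_θ u / c]) = c ((1 + ε² W) u - u³)  in t.
    Multiplying it by u, resp. by c u_t, every term except the θ-term and the integrals kept
    on the left is an exact t-derivative; integrating gives the first two identities.  The
    third is 2κ times the first minus the second, since ∂_t (c u) = κ u + c u_t. *)

From Stdlib Require Import Reals Lra.
From Coquelicot Require Import Coquelicot.
Open Scope R_scope.

(* Coquelicot states these rules for abstract modules, where [plus], [mult] and [scal] on [R]
   are only convertible to [Rplus] and [Rmult]: [rewrite], [apply] and [field] do not see
   through this. *)

Lemma continuous_Rplus (f g : R -> R) x :
  continuous f x -> continuous g x -> continuous (fun y => f y + g y) x.
Proof. exact (continuous_plus f g x). Qed.

Lemma continuous_Rminus (f g : R -> R) x :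
  continuous f x -> continuous g x -> continuous (fun y => f y - g y) x.
Proof. exact (continuous_minus f g x). Qed.

Lemma continuous_Rmult (f g : R -> R) x :
  continuous f x -> continuous g x -> continuous (fun y => f y * g y) x.
Proof. exact (continuous_mult f g x). Qed.

Lemma continuous_Rpow (f : R -> R) n x :
  continuous f x -> continuous (fun y => f y ^ n) x.
Proof.
  intros Hf; induction n as [|n IH]; simpl.
  - apply continuous_const.
  - now apply continuous_Rmult.
Qed.

Lemma RInt_Rplus (f g : R -> R) a b :
  ex_RInt f a b -> ex_RInt g a b ->
  RInt (fun t => f t + g t) a b = RInt f a b + RInt g a b.
Proof. exact (RInt_plus f g a b). Qed.

Lemma RInt_Rminus (f g : R -> R) a b :
  ex_RInt f a b -> ex_RInt g a b ->
  RInt (fun t => f t - g t) a b = RInt f a b - RInt g a b.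
Proof. exact (RInt_minus f g a b). Qed.

Lemma RInt_Rscal (f : R -> R) a b l :
  ex_RInt f a b -> RInt (fun t => l * f t) a b = l * RInt f a b.
Proof. exact (RInt_scal f a b l). Qed.

Lemma RInt_Rext (f g : R -> R) a b :
  (forall x, Rmin a b < x < Rmax a b -> f x = g x) -> RInt f a b = RInt g a b.
Proof. exact (RInt_ext f g a b). Qed.

Lemma RInt_is_derive (F f : R -> R) a b :
  (forall x, Rmin a b <= x <= Rmax a b -> is_derive F x (f x)) ->
  (forall x, Rmin a b <= x <= Rmax a b -> continuous f x) ->
  RInt f a b = evalb F a b.
Proof. intros HF Hf. exact (is_RInt_unique _ _ _ _ (is_RInt_derive F f a b HF Hf)). Qed.

Lemma pow4_abs x : Rabs x ^ 4 = x ^ 4.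
Proof. change 4%nat with (2 * 2)%nat. now rewrite !pow_mult, pow2_abs. Qed.

Section NormalSegment.

Variables (a b k eps : R) (u u1 u2 W W1 q : R -> R).

Hypothesis eps_neq0 : eps <> 0.
Hypothesis u_derive : forall x, Rmin a b <= x <= Rmax a b -> is_derive u x (u1 x).
Hypothesis u1_derive : forall x, Rmin a b <= x <= Rmax a b -> is_derive u1 x (u2 x).
Hypothesis W_derive : forall x, Rmin a b <= x <= Rmax a b -> is_derive W x (W1 x).
Hypothesis u2_continuous : forall x, Rmin a b <= x <= Rmax a b -> continuous u2 x.
Hypothesis W1_continuous : forall x, Rmin a b <= x <= Rmax a b -> continuous W1 x.
Hypothesis normal_ode : forall x, Rmin a b <= x <= Rmax a b ->
  eps ^ 2 * (k * u1 x + (1 + k * x) * u2 x + q x)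
  = (1 + k * x) * ((1 + eps ^ 2 * W x) * u x - u x ^ 3).

Let q_ode t := (1 + k * t) * ((1 + eps ^ 2 * W t) * u t - u t ^ 3) * / eps ^ 2
               - (k * u1 t + (1 + k * t) * u2 t).

Lemma q_eq_q_ode x : Rmin a b <= x <= Rmax a b -> q x = q_ode x.
Proof.
  intros Hx. unfold q_ode. rewrite <- normal_ode by exact Hx. field. exact eps_neq0.
Qed.

(* [q] is only known on the segment, so integrals against it are computed through [q_ode],
   which is continuous up to the end points. *)
Lemma RInt_mul_q (f : R -> R) :
  RInt (fun t => f t * q t) a b = RInt (fun t => f t * q_ode t) a b.
Proof. apply RInt_Rext. intros x Hx. rewrite q_eq_q_ode by lra. reflexivity. Qed.

Lemma segment_continuous x : Rmin a b <= x <= Rmax a b ->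
  continuous u x /\ continuous u1 x /\ continuous u2 x /\ continuous W x /\ continuous W1 x.
Proof.
  intros Hx. repeat split; auto.
  - apply (ex_derive_continuous u). eexists. exact (u_derive x Hx).
  - apply (ex_derive_continuous u1). eexists. exact (u1_derive x Hx).
  - apply (ex_derive_continuous W). eexists. exact (W_derive x Hx).
Qed.

Ltac continuity_on_segment :=
  intros ?x ?Hx; unfold q_ode;
  destruct (segment_continuous _ Hx) as (? & ? & ? & ? & ?);
  repeat match goal with
  | |- continuous (fun _ => _ + _) _ => apply continuous_Rplus
  | |- continuous (fun _ => _ - _) _ => apply continuous_Rminus
  | |- continuous (fun _ => _ * _) _ => apply continuous_Rmult
  | |- continuous (fun _ => _ ^ _) _ => apply continuous_Rpow
  | |- continuous (fun t => t) _ => apply continuous_id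
  | |- continuous (Rmult ?c) _ => apply (continuous_Rmult (fun _ => c) (fun t => t))
  | |- continuous (fun _ => ?c) _ => apply continuous_const
  | _ => assumption
  end.

Ltac ex_RInt_on_segment :=
  apply (ex_RInt_continuous (V := R_CompleteNormedModule)); continuity_on_segment.

Ltac derive_on_segment Hx :=
  auto_derive;
  [ repeat split; eexists;
    match goal with
    | |- is_derive (fun _ => u _) _ _ => exact (u_derive _ Hx)
    | |- is_derive (fun _ => u1 _) _ _ => exact (u1_derive _ Hx)
    | |- is_derive (fun _ => W _) _ _ => exact (W_derive _ Hx)
    end
  | rewrite ?(is_derive_unique (fun t : R => u t) _ _ (u_derive _ Hx)),
      ?(is_derive_unique (fun t : R => u1 t) _ _ (u1_derive _ Hx)),
      ?(is_derive_unique (fun t : R => W t) _ _ (W_derive _ Hx)); field ].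

Lemma energy_identity :
  eps ^ 2 * RInt (fun t => (1 + k * t) * u1 t ^ 2) a b
  + RInt (fun t => (1 + k * t) * (1 + eps ^ 2 * W t) * u t ^ 2) a b
  - RInt (fun t => (1 + k * t) * u t ^ 4) a b
  = eps ^ 2 * RInt (fun t => u t * q t) a b
    + eps ^ 2 * evalb (fun t => (1 + k * t) * u t * u1 t) a b.
Proof.
  rewrite RInt_mul_q.
  assert (Hflux : RInt (fun t => eps ^ 2 * ((1 + k * t) * u1 t ^ 2)
                        + (1 + k * t) * (1 + eps ^ 2 * W t) * u t ^ 2
                        - (1 + k * t) * u t ^ 4 - eps ^ 2 * (u t * q_ode t)) a b
                 = evalb (fun t => eps ^ 2 * ((1 + k * t) * u t * u1 t)) a b).
  { rewrite (RInt_Rext _ (fun t => eps ^ 2 * (k * u t * u1 t + (1 + k * t) * u1 t ^ 2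
                                            + (1 + k * t) * u t * u2 t))).
    - apply RInt_is_derive; [intros x Hx; derive_on_segment Hx | continuity_on_segment].
    - intros x _. unfold q_ode. cbv beta. field. exact eps_neq0. }
  rewrite !RInt_Rminus, RInt_Rplus, !RInt_Rscal in Hflux by ex_RInt_on_segment.
  unfold evalb in *. lra.
Qed.

Lemma pohozaev_identity :
  eps ^ 2 * RInt (fun t => (1 + k * t) ^ 2 * W1 t * u t ^ 2) a b
  + 2 * k * RInt (fun t => (1 + k * t) * (1 + eps ^ 2 * W t) * u t ^ 2) a b
  - k * RInt (fun t => (1 + k * t) * u t ^ 4) a b
  = - 2 * eps ^ 2 * RInt (fun t => (1 + k * t) * u1 t * q t) a b
    - eps ^ 2 * evalb (fun t => ((1 + k * t) * u1 t) ^ 2) a b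
    + evalb (fun t => (1 + k * t) ^ 2 * (1 + eps ^ 2 * W t) * u t ^ 2) a b
    - / 2 * evalb (fun t => (1 + k * t) ^ 2 * u t ^ 4) a b.
Proof.
  rewrite RInt_mul_q.
  assert (Hflux : RInt (fun t => eps ^ 2 * ((1 + k * t) ^ 2 * W1 t * u t ^ 2)
                        + 2 * k * ((1 + k * t) * (1 + eps ^ 2 * W t) * u t ^ 2)
                        - k * ((1 + k * t) * u t ^ 4)
                        + 2 * eps ^ 2 * ((1 + k * t) * u1 t * q_ode t)) a b
                 = evalb (fun t => - eps ^ 2 * ((1 + k * t) * u1 t) ^ 2
                                   + (1 + k * t) ^ 2 * (1 + eps ^ 2 * W t) * u t ^ 2
                                   - / 2 * ((1 + k * t) ^ 2 * u t ^ 4)) a b).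
  { rewrite (RInt_Rext _ (fun t =>
        - 2 * eps ^ 2 * (1 + k * t) * u1 t * (k * u1 t + (1 + k * t) * u2 t)
        + 2 * k * (1 + k * t) * (1 + eps ^ 2 * W t) * u t ^ 2
        + (1 + k * t) ^ 2 * eps ^ 2 * W1 t * u t ^ 2
        + 2 * (1 + k * t) ^ 2 * (1 + eps ^ 2 * W t) * u t * u1 t
        - k * (1 + k * t) * u t ^ 4 - 2 * (1 + k * t) ^ 2 * u t ^ 3 * u1 t)).
    - apply RInt_is_derive; [intros x Hx; derive_on_segment Hx | continuity_on_segment].
    - intros x _. unfold q_ode. cbv beta. field. exact eps_neq0. }
  rewrite RInt_Rplus, RInt_Rminus, RInt_Rplus, !RInt_Rscal in Hflux by ex_RInt_on_segment.
  unfold evalb in *. lra.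
Qed.

Lemma RInt_split_q :
  RInt (fun t => (k * u t + (1 + k * t) * u1 t) * q t) a b
  = k * RInt (fun t => u t * q t) a b + RInt (fun t => (1 + k * t) * u1 t * q t) a b.
Proof.
  rewrite !RInt_mul_q, <- RInt_Rscal, <- RInt_Rplus by ex_RInt_on_segment.
  apply RInt_Rext. intros x _. ring.
Qed.

Lemma combined_identity :
  2 * eps ^ 2 * k * RInt (fun t => (1 + k * t) * u1 t ^ 2) a b
  - eps ^ 2 * RInt (fun t => (1 + k * t) ^ 2 * W1 t * u t ^ 2) a b
  - k * RInt (fun t => (1 + k * t) * u t ^ 4) a b
  = 2 * eps ^ 2 * RInt (fun t => (k * u t + (1 + k * t) * u1 t) * q t) a b
    + 2 * eps ^ 2 * k * evalb (fun t => (1 + k * t) * u t * u1 t) a b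
    + eps ^ 2 * evalb (fun t => ((1 + k * t) * u1 t) ^ 2) a b
    - evalb (fun t => (1 + k * t) ^ 2 * (1 + eps ^ 2 * W t) * u t ^ 2) a b
    + / 2 * evalb (fun t => (1 + k * t) ^ 2 * u t ^ 4) a b.
Proof.
  rewrite RInt_split_q.
  pose proof energy_identity as E. pose proof pohozaev_identity as P.
  nra.
Qed.

End NormalSegment.

Lemma continuous_slice_fst (f : R -> R -> R) t th :
  continuous (fun p : R * R => f (fst p) (snd p)) (t, th) -> continuous (fun s => f s th) t.
Proof.
  apply (continuous_comp_2 (fun s => s) (fun _ => th) f t).
  - apply continuous_id.
  - apply continuous_const.
Qed.

Lemma C1_strip_is_derive_pt M0 f t th :
  C1_strip M0 f -> Rabs t < M0 -> is_derive (fun s => f s th) t (pt f t th).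
Proof. intros Hf Ht. apply Derive_correct. apply (Hf t th Ht). Qed.

Lemma C1_strip_continuous_pt M0 f t th :
  C1_strip M0 f -> Rabs t < M0 -> continuous (fun s => pt f s th) t.
Proof. intros Hf Ht. apply continuous_slice_fst. apply (Hf t th Ht). Qed.

Lemma pt_affine_mult (kappa : R -> R) (f : R -> R -> R) t th :
  ex_derive (fun s => f s th) t ->
  pt (fun s x => (1 + kappa x * s) * f s x) t th
  = kappa th * f t th + (1 + kappa th * t) * pt f t th.
Proof.
  intros Hf. unfold pt at 1. apply is_derive_unique.
  auto_derive; [exact Hf |]. unfold pt. ring.
Qed.

Lemma fermi_pde_along_normal (kappa : R -> R) (eps : R) (u W : R -> R -> R) t th :
  ex_derive (fun s => pt u s th) t -> 0 < 1 + kappa th * t ->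
  - eps ^ 2 * fermi_lap kappa u t th + (1 + eps ^ 2 * W t th) * u t th
  - Rabs (u t th) ^ 2 * u t th = 0 ->
  eps ^ 2 * (kappa th * pt u t th + (1 + kappa th * t) * pt (pt u) t th
             + pth (fun s x => pth u s x / (1 + kappa x * s)) t th)
  = (1 + kappa th * t) * ((1 + eps ^ 2 * W t th) * u t th - u t th ^ 3).
Proof.
  intros Hd Hc Hpde.
  unfold fermi_lap in Hpde. rewrite pt_affine_mult, pow2_abs in Hpde by exact Hd.
  set (c := 1 + kappa th * t) in *.
  set (A := kappa th * pt u t th + c * pt (pt u) t th) in *.
  set (Q := pth (fun s x => pth u s x / (1 + kappa x * s)) t th) in *.
  transitivity (c * (eps ^ 2 * (/ c * A + / c * Q))); [field; lra |].
  f_equal. simpl in Hpde |- *. lra.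
Qed.

Theorem lemma4p1 (kappa : R -> R) (M0 eps : R) (u W : R -> R -> R)
  (hM0 : 0 < M0)
  (heps : 0 < eps)
  (hkappa : forall th, ex_derive kappa th /\ continuous (Derive kappa) th)
  (hfermi : forall t th, Rabs t < M0 -> 0 < 1 + kappa th * t)
  (hu : C2_strip M0 u)
  (hW : C1_strip M0 W)
  (hpde : forall t th, Rabs t < M0 ->
     - eps ^ 2 * fermi_lap kappa u t th + (1 + eps ^ 2 * W t th) * u t th
     - (Rabs (u t th)) ^ 2 * u t th = 0) :
  forall (M th : R), 0 < M -> M < M0 ->
  let k := kappa th in
  let Q := fun t => pth (fun s x => pth u s x / (1 + kappa x * s)) t th in
  (eps ^ 2 * RInt (fun t => (1 + k * t) * (pt u t th) ^ 2) (- M) M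
   + RInt (fun t => (1 + k * t) * (1 + eps ^ 2 * W t th) * (u t th) ^ 2) (- M) M
   - RInt (fun t => (1 + k * t) * (u t th) ^ 4) (- M) M
   = eps ^ 2 * RInt (fun t => u t th * Q t) (- M) M
     + eps ^ 2 * evalb (fun t => (1 + k * t) * u t th * pt u t th) (- M) M)
  /\
  (eps ^ 2 * RInt (fun t => (1 + k * t) ^ 2 * pt W t th * (u t th) ^ 2) (- M) M
   + 2 * k * RInt (fun t => (1 + k * t) * (1 + eps ^ 2 * W t th) * (u t th) ^ 2) (- M) M
   - k * RInt (fun t => (1 + k * t) * (u t th) ^ 4) (- M) M
   = - 2 * eps ^ 2 * RInt (fun t => (1 + k * t) * pt u t th * Q t) (- M) M
     - eps ^ 2 * evalb (fun t => ((1 + k * t) * pt u t th) ^ 2) (- M) M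
     + evalb (fun t => (1 + k * t) ^ 2 * (1 + eps ^ 2 * W t th) * (u t th) ^ 2) (- M) M
     - / 2 * evalb (fun t => (1 + k * t) ^ 2 * (Rabs (u t th)) ^ 4) (- M) M)
  /\
  (2 * eps ^ 2 * k * RInt (fun t => (1 + k * t) * (pt u t th) ^ 2) (- M) M
   - eps ^ 2 * RInt (fun t => (1 + k * t) ^ 2 * pt W t th * (u t th) ^ 2) (- M) M
   - k * RInt (fun t => (1 + k * t) * (u t th) ^ 4) (- M) M
   = 2 * eps ^ 2 * RInt (fun t => pt (fun s x => (1 + kappa x * s) * u s x) t th * Q t) (- M) M
     + 2 * eps ^ 2 * k * evalb (fun t => (1 + k * t) * u t th * pt u t th) (- M) M
     + eps ^ 2 * evalb (fun t => ((1 + k * t) * pt u t th) ^ 2) (- M) M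
     - evalb (fun t => (1 + k * t) ^ 2 * (1 + eps ^ 2 * W t th) * (u t th) ^ 2) (- M) M
     + / 2 * evalb (fun t => (1 + k * t) ^ 2 * (Rabs (u t th)) ^ 4) (- M) M).
Proof.
  intros M th HM HMM0 k Q.
  destruct hu as [hu0 [hu1 _]].
  assert (Hstrip : forall t, Rmin (- M) M <= t <= Rmax (- M) M -> Rabs t < M0).
  { intros t Ht. rewrite Rmin_left, Rmax_right in Ht by lra. apply Rabs_def1; lra. }
  assert (Heps : eps <> 0) by lra.
  pose proof (fun t Ht => C1_strip_is_derive_pt _ _ t th hu0 (Hstrip t Ht)) as Hu.
  pose proof (fun t Ht => C1_strip_is_derive_pt _ _ t th hu1 (Hstrip t Ht)) as Hu1.
  pose proof (fun t Ht => C1_strip_is_derive_pt _ _ t th hW (Hstrip t Ht)) as HW.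
  pose proof (fun t Ht => C1_strip_continuous_pt _ _ t th hu1 (Hstrip t Ht)) as Hu2.
  pose proof (fun t Ht => C1_strip_continuous_pt _ _ t th hW (Hstrip t Ht)) as HW1.
  assert (Hode : forall t, Rmin (- M) M <= t <= Rmax (- M) M ->
    eps ^ 2 * (k * pt u t th + (1 + k * t) * pt (pt u) t th + Q t)
    = (1 + k * t) * ((1 + eps ^ 2 * W t th) * u t th - u t th ^ 3)).
  { intros t Ht. apply fermi_pde_along_normal.
    - eexists. exact (Hu1 t Ht).
    - exact (hfermi t th (Hstrip t Ht)).
    - exact (hpde t th (Hstrip t Ht)). }
  pose proof (energy_identity _ _ _ _ _ _ _ _ _ Q Heps Hu Hu1 HW Hu2 HW1 Hode) as E.
  pose proof (pohozaev_identity _ _ _ _ _ _ _ _ _ Q Heps Hu Hu1 HW Hu2 HW1 Hode) as P.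
  pose proof (combined_identity _ _ _ _ _ _ _ _ _ Q Heps Hu Hu1 HW Hu2 HW1 Hode) as C.
  rewrite (RInt_Rext (fun t => pt (fun s x => (1 + kappa x * s) * u s x) t th * Q t)
                     (fun t => (k * u t th + (1 + k * t) * pt u t th) * Q t)).
  2: { intros t Ht. cbv beta. rewrite pt_affine_mult; [reflexivity |].
        eexists. exact (Hu t ltac:(lra)). }
  unfold evalb in *. rewrite !pow4_abs.
  cbv beta in E, P, C. auto.
Qed.
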